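(* Let $(X,Y)$ be a random pair in $\mathbb{R}^d\times\mathbb{R}$ with law $\rho$ such that $\|X\|^2\le K$ almost surely, and let $\Sigma=\mathbb{E}[XX^\top]$ and $L(\theta)=\frac12\mathbb{E}[(\langle\theta,X\rangle-Y)^2]$. For $\theta\in\mathbb{R}^d$ let $r_X(\theta)=\langle\theta,X\rangle-Y$ and $$\sigma(\theta)=\Big(\mathbb{E}[r_X(\theta)^2XX^\top]-\mathbb{E}[r_X(\theta)X]\,\mathbb{E}[r_X(\theta)X]^\top\Big)^{1/2}$$ (positive semidefinite square root). Assume there exists $a>0$ such that for all $\theta\in\mathbb{R}^d$, $\sigma(\theta)^2\succcurlyeq a^2L(\theta)I_d$ and $L(\theta)\ge a^2$. Then there exists a constant $c>0$ depending only on $\rho$ such that for all $\theta,\eta\in\mathbb{R}^d$, $$\|\sigma(\theta)-\sigma(\eta)\|_{\mathrm{HS}}^2\le 2cK\,\langle\Sigma(\theta-\eta),\theta-\eta\rangle.$$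
   Context: $\|\cdot\|_{\mathrm{HS}}$ is the Hilbert–Schmidt (Frobenius) norm; $\succcurlyeq$ is the Loewner order on symmetric matrices. *)

From HB Require Import structures.
From mathcomp Require Import all_boot all_order all_algebra.
From mathcomp Require Import all_classical all_reals all_analysis.
Set Implicit Arguments. Unset Strict Implicit. Unset Printing Implicit Defensive.
Import Order.TTheory GRing.Theory Num.Theory.
Local Open Scope ring_scope.

Definition psd (R : realType) (n : nat) (S : 'M[R]_n) : Prop :=
  S^T = S /\ forall v : 'cV[R]_n, 0 <= (v^T *m S *m v) 0 0.

Definition loewner_ge (R : realType) (n : nat) (A B : 'M[R]_n) : Prop :=
  psd (A - B).

(* The positive semidefinite square root: the (unique, when M is PSD) PSD
   matrix S with S * S = M (chosen classically; 0 if none exists). *)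
Definition psd_sqrt (R : realType) (n : nat) (M : 'M[R]_n) : 'M[R]_n :=
  xget 0 [set S : 'M[R]_n | psd S /\ S *m S = M].

Definition hs2 (R : realType) (m n : nat) (A : 'M[R]_(m, n)) : R :=
  \sum_i \sum_j (A i j) ^+ 2.

Section Model.
Context {dT : measure_display} {T : measurableType dT} {R : realType}
  (P : probability T R) (d : nat) (X : 'I_d -> T -> R) (Y : T -> R).

Definition Ex (f : T -> R) : R := fine ('E_P[f])%E.

Definition Emx m n (F : T -> 'M[R]_(m, n)) : 'M[R]_(m, n) :=
  \matrix_(i, j) Ex (fun w => F w i j).

Definition Xv (w : T) : 'cV[R]_d := \col_i X i w.

Definition resid (theta : 'cV[R]_d) (w : T) : R :=
  \sum_i theta i 0 * X i w - Y w.

Definition Sigma : 'M[R]_d := Emx (fun w => Xv w *m (Xv w)^T).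

Definition Lrisk (theta : 'cV[R]_d) : R :=
  Ex (fun w => resid theta w ^+ 2) / 2.

Definition Erx (theta : 'cV[R]_d) : 'cV[R]_d :=
  Emx (fun w => resid theta w *: Xv w).

Definition covmat (theta : 'cV[R]_d) : 'M[R]_d :=
  Emx (fun w => (resid theta w ^+ 2) *: (Xv w *m (Xv w)^T))
  - Erx theta *m (Erx theta)^T.

Definition sigma_noise (theta : 'cV[R]_d) : 'M[R]_d := psd_sqrt (covmat theta).

End Model.

From HB Require Import structures.
From mathcomp Require Import all_boot all_order all_algebra.
From mathcomp Require Import all_classical all_reals all_analysis.
From mathcomp Require Import ring lra measurable_realfun.
Set Implicit Arguments.
Unset Strict Implicit.
Unset Printing Implicit Defensive.
Import Order.TTheory GRing.Theory Num.Theory.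
Local Open Scope ring_scope.

(* Write [A = sigma θ], [B = sigma η], [D = A - B].  Since [A^2 - B^2 = A D + D B],
   [<D, A^2 - B^2>_HS] is a sum of quadratic forms of [A] and [B] at the columns
   and rows of [D], so lower bounds [A >= κ_θ I], [B >= κ_η I] give
   [(κ_θ + κ_η) |D|_HS <= |A^2 - B^2|_HS].  Such bounds come from
   [A^2 >= a^2 L(θ) I] together with [|A|_HS^2 = tr A^2 <= K E[r_θ^2] = 2 K L(θ)]
   (Cauchy-Schwarz for the form of [A]), giving [κ_θ^2 = a^4 L(θ) / (2K)].
   Finally [A^2 - B^2 = covmat θ - covmat η] is an expectation linear in
   [r_θ - r_η = <θ - η, X>], and Cauchy-Schwarz in [L^2(P)] bounds its HS norm
   by [18 K^2 (L(θ) + L(η)) <Σ(θ - η), θ - η>]; the [L(θ) + L(η)] cancel. *)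

Section RealInequalities.
Variable R : realFieldType.

Lemma quadratic_ge0_discr (p b r : R) : 0 <= r ->
  (forall t, 0 <= p + 2 * b * t + r * t ^+ 2) -> b ^+ 2 <= p * r.
Proof.
move=> r0; have [->|rne0] := eqVneq r 0 => H.
  have [->|bne0] := eqVneq b 0; first by rewrite expr0n /= mulr0.
  have := H (- (p + 1) / (2 * b)).
  have -> : p + 2 * b * (- (p + 1) / (2 * b)) + 0 * (- (p + 1) / (2 * b)) ^+ 2 = -1
    by field.
  by rewrite ler0N1.
have rp : 0 < r by rewrite lt_def rne0.
have := H (- b / r).
have -> : p + 2 * b * (- b / r) + r * (- b / r) ^+ 2 = (p * r - b ^+ 2) / r by field.
by rewrite pmulr_lge0 ?invr_gt0 // subr_ge0.
Qed.

Lemma cauchy_schwarz_sum (I : finType) (x y : I -> R) :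
  (\sum_i x i * y i) ^+ 2 <= (\sum_i x i ^+ 2) * (\sum_i y i ^+ 2).
Proof.
apply: quadratic_ge0_discr; first by apply: sumr_ge0 => i _; rewrite sqr_ge0.
move=> t; have -> : \sum_i x i ^+ 2 + 2 * (\sum_i x i * y i) * t
    + (\sum_i y i ^+ 2) * t ^+ 2 = \sum_i (x i + t * y i) ^+ 2.
  transitivity (\sum_i (x i ^+ 2 + (2 * t) * (x i * y i) + t ^+ 2 * y i ^+ 2)).
    by rewrite !big_split /= -!mulr_sumr; ring.
  by apply: eq_bigr => i _; ring.
by apply: sumr_ge0 => i _; rewrite sqr_ge0.
Qed.

Lemma cauchy_schwarz_sum2 (I J : finType) (x y : I -> J -> R) :
  (\sum_i \sum_j x i j * y i j) ^+ 2 <=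
  (\sum_i \sum_j x i j ^+ 2) * (\sum_i \sum_j y i j ^+ 2).
Proof.
rewrite !pair_bigA /=.
exact: (cauchy_schwarz_sum (fun p : I * J => x p.1 p.2) (fun p => y p.1 p.2)).
Qed.

Lemma cauchy_schwarz_bilinear (I J : finType) (W : I -> J -> R) x y :
  (\sum_i \sum_j W i j * (x i * y j)) ^+ 2 <=
  (\sum_i \sum_j W i j ^+ 2) * ((\sum_i x i ^+ 2) * (\sum_j y j ^+ 2)).
Proof.
apply: le_trans (cauchy_schwarz_sum2 W (fun i j => x i * y j)) _.
rewrite [X in _ * X <= _](_ : _ = (\sum_i x i ^+ 2) * (\sum_j y j ^+ 2)) //.
rewrite mulr_suml; apply: eq_bigr => i _.
by rewrite mulr_sumr; apply: eq_bigr => j _; rewrite exprMn.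
Qed.

Lemma sqr_sub3_le (x y z : R) : (x - y - z) ^+ 2 <= 3 * (x ^+ 2 + y ^+ 2 + z ^+ 2).
Proof.
rewrite -subr_ge0.
have -> : 3 * (x ^+ 2 + y ^+ 2 + z ^+ 2) - (x - y - z) ^+ 2 =
  (x + y) ^+ 2 + (x + z) ^+ 2 + (y - z) ^+ 2 by ring.
by rewrite !addr_ge0 ?sqr_ge0.
Qed.

Lemma le_of_sqr_le_mul (x c : R) : 0 <= x -> 0 <= c -> x ^+ 2 <= c * x -> x <= c.
Proof.
move=> x0 c0 hx; have [->|xne0] := eqVneq x 0; first exact: c0.
have xpos : 0 < x by rewrite lt_def xne0.
by rewrite -(ler_pM2r xpos) -expr2.
Qed.

End RealInequalities.

Section NormInequalities.
Variable R : realDomainType.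

Lemma normM_le_sqrD (x y : R) : `|x * y| <= x ^+ 2 + y ^+ 2.
Proof.
rewrite normrM -(real_normK (num_real x)) -(real_normK (num_real y)).
have := normr_ge0 x; have := normr_ge0 y; nra.
Qed.

End NormInequalities.

Section QuadraticForms.
Variables (R : realType) (n : nat).
Implicit Types (A B : 'M[R]_n) (v w : 'cV[R]_n).

Definition qform A v := (v^T *m A *m v) 0 0.
Definition sqnorm v := \sum_i v i 0 ^+ 2.

Lemma mxbilinE v A w :
  (v^T *m A *m w) 0 0 = \sum_i \sum_j A i j * (v i 0 * w j 0).
Proof.
rewrite mxE; under eq_bigr => j _ do rewrite mxE mulr_suml.
rewrite exchange_big; apply: eq_bigr => i _; apply: eq_bigr => j _.
by rewrite mxE; ring.
Qed.

Lemma sqnormE v : (v^T *m v) 0 0 = sqnorm v.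
Proof. by rewrite mxE; apply: eq_bigr => i _; rewrite mxE expr2. Qed.

Lemma sqnorm_ge0 v : 0 <= sqnorm v.
Proof. by apply: sumr_ge0 => i _; rewrite sqr_ge0. Qed.

Lemma hs2_ge0 m (A : 'M[R]_(m, n)) : 0 <= hs2 A.
Proof. by apply: sumr_ge0 => i _; apply: sumr_ge0 => j _; rewrite sqr_ge0. Qed.

Lemma qform_ge0 A v : psd A -> 0 <= qform A v.
Proof. by case=> _; apply. Qed.

Lemma mxbilinC A v w : A^T = A -> (v^T *m A *m w) 0 0 = (w^T *m A *m v) 0 0.
Proof.
move=> sA; rewrite -[in RHS](trmxK (w^T *m A *m v)) [RHS]mxE.
by rewrite !trmx_mul trmxK sA mulmxA.
Qed.

Lemma psd_cauchy_schwarz A v w : psd A ->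
  ((v^T *m A *m w) 0 0) ^+ 2 <= qform A v * qform A w.
Proof.
move=> [sA pA]; apply: quadratic_ge0_discr; first exact: pA.
move=> t; have := pA (v + t *: w).
have -> : 2 * (v^T *m A *m w) 0 0 * t =
    (v^T *m A *m w) 0 0 * t + (w^T *m A *m v) 0 0 * t.
  by rewrite -(mxbilinC v w sA); ring.
rewrite /qform !mxbilinE; congr (_ <= _); rewrite !mulr_suml -!big_split /=.
apply: eq_bigr => i _; rewrite !mulr_suml -!big_split /=.
by apply: eq_bigr => j _; rewrite !mxE; ring.
Qed.

Lemma mxbilin_sqr_le v A w :
  ((v^T *m A *m w) 0 0) ^+ 2 <= hs2 A * (sqnorm v * sqnorm w).
Proof. by rewrite mxbilinE; exact: cauchy_schwarz_bilinear. Qed.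

(* With [w = A v]: [|w|^2 = <v, A w> <= sqrt(<v, A v> <w, A w>)] and
   [<w, A w> <= |A|_HS |w|^2], so [|w|^2 <= <v, A v> |A|_HS]. *)
Lemma psd_sqr_lbound A (k : R) : psd A -> 0 <= k ->
  (forall v, k * sqnorm v <= qform (A *m A) v) ->
  forall v, k ^+ 2 * sqnorm v ^+ 2 <= hs2 A * qform A v ^+ 2.
Proof.
move=> pA k0 hk v; have [sA _] := pA; set w := A *m v.
have wE : qform (A *m A) v = sqnorm w by rewrite -sqnormE /qform trmx_mul sA !mulmxA.
have bilE : (v^T *m A *m w) 0 0 = sqnorm w by rewrite -wE /qform /w !mulmxA.
have cs1 := psd_cauchy_schwarz v w pA; rewrite bilE in cs1.
have cs2 := mxbilin_sqr_le w A w; rewrite -expr2 in cs2.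
have := hk v; rewrite wE => hkw.
have p0 := qform_ge0 v pA; have m0 := qform_ge0 w pA.
have t0 := sqnorm_ge0 w; have s0 := sqnorm_ge0 v; have H0 := hs2_ge0 A.
have ks0 : 0 <= k * sqnorm v by rewrite mulr_ge0.
have e1 : (k * sqnorm v) ^+ 2 <= sqnorm w ^+ 2 by rewrite ler_sqr ?nnegrE.
rewrite -exprMn (le_trans e1) //.
have [t00|tne0] := eqVneq (sqnorm w) 0.
  by rewrite t00 expr0n mulr_ge0 ?sqr_ge0.
have tpos : 0 < sqnorm w by rewrite lt_def tne0.
rewrite -(ler_pM2r (exprn_gt0 2 tpos)).
apply: le_trans (_ : _ <= qform A v ^+ 2 * qform A w ^+ 2) _.
  by rewrite -!exprMn ler_sqr ?nnegrE ?mulr_ge0 ?sqr_ge0.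
have -> : hs2 A * qform A v ^+ 2 * sqnorm w ^+ 2 =
  qform A v ^+ 2 * (hs2 A * sqnorm w ^+ 2) by ring.
by rewrite ler_wpM2l ?sqr_ge0.
Qed.

Lemma psd_lbound A (k M : R) : psd A -> 0 <= k -> 0 < M -> hs2 A <= M ->
  (forall v, k * sqnorm v <= qform (A *m A) v) ->
  forall v, k / Num.sqrt M * sqnorm v <= qform A v.
Proof.
move=> pA k0 M0 hM hk v; have q0 := qform_ge0 v pA.
have lhs0 : 0 <= k / Num.sqrt M * sqnorm v by rewrite !mulr_ge0 ?invr_ge0 ?sqrtr_ge0 ?sqnorm_ge0.
rewrite -ler_sqr ?nnegrE // !exprMn exprVn sqr_sqrtr ?(ltW M0) //.
rewrite mulrAC ler_pdivrMr // [X in _ <= X]mulrC.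
by apply: le_trans (psd_sqr_lbound pA k0 hk v) _; rewrite ler_wpM2r ?sqr_ge0.
Qed.

Lemma hs2_cols A : hs2 A = \sum_j sqnorm (col j A).
Proof.
rewrite /hs2 exchange_big; apply: eq_bigr => j _.
by apply: eq_bigr => i _; rewrite mxE.
Qed.

Lemma hs2_rows A : hs2 A = \sum_i sqnorm (row i A)^T.
Proof. by apply: eq_bigr => i _; apply: eq_bigr => j _; rewrite !mxE. Qed.

Lemma hs2_dot_sub_sqr A B :
  \sum_i \sum_j (A - B) i j * (A *m A - B *m B) i j =
  \sum_j qform A (col j (A - B)) + \sum_i qform B (row i (A - B))^T.
Proof.
transitivity (\sum_i \sum_j \sum_l A i l * ((A - B) i j * (A - B) l j) +
              \sum_i \sum_j \sum_l B l j * ((A - B) i l * (A - B) i j)).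
  rewrite -big_split; apply: eq_bigr => i _ /=.
  rewrite -big_split; apply: eq_bigr => j _ /=.
  rewrite [(A *m A - B *m B) i j]mxE !mxE -sumrB mulr_sumr -big_split.
  by apply: eq_bigr => l _ /=; rewrite !mxE; ring.
congr (_ + _).
  rewrite exchange_big; apply: eq_bigr => j _; rewrite /qform mxbilinE.
  by apply: eq_bigr => i _; apply: eq_bigr => l _; rewrite !mxE.
apply: eq_bigr => i _; rewrite exchange_big /qform mxbilinE.
by apply: eq_bigr => l _; apply: eq_bigr => j _; rewrite !mxE.
Qed.

Lemma hs2_sub_le_sqr A B (kA kB : R) : 0 <= kA + kB ->
  (forall v, kA * sqnorm v <= qform A v) -> (forall v, kB * sqnorm v <= qform B v) ->
  (kA + kB) ^+ 2 * hs2 (A - B) <= hs2 (A *m A - B *m B).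
Proof.
move=> k0 hA hB; set D := A - B; set E := A *m A - B *m B.
have lower : (kA + kB) * hs2 D <= \sum_i \sum_j D i j * E i j.
  rewrite hs2_dot_sub_sqr mulrDl; apply: lerD.
    by rewrite hs2_cols mulr_sumr; apply: ler_sum => j _.
  by rewrite hs2_rows mulr_sumr; apply: ler_sum => i _.
have upper := cauchy_schwarz_sum2 D E.
have [->|Dne0] := eqVneq (hs2 D) 0; first by rewrite mulr0 hs2_ge0.
have Dpos : 0 < hs2 D by rewrite lt_def Dne0 hs2_ge0.
rewrite -(ler_pM2r Dpos) [hs2 E * _]mulrC -mulrA -expr2 -exprMn.
have dot0 : 0 <= \sum_i \sum_j D i j * E i j.
  by apply: le_trans lower; rewrite mulr_ge0 ?hs2_ge0.
by apply: le_trans upper; rewrite ler_sqr ?nnegrE ?mulr_ge0 ?hs2_ge0.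
Qed.

Lemma loewner_ge_sqr_scalar A (k : R) : loewner_ge (A ^+ 2) k%:M ->
  forall v, k * sqnorm v <= qform (A *m A) v.
Proof.
move=> [_ h] v; have := h v.
rewrite expr2 -mulmxE mulmxBr mulmxBl mul_mx_scalar -scalemxAl.
rewrite [in X in 0 <= X -> _]mxE [in X in 0 <= _ + X -> _]mxE [in X in 0 <= _ - X -> _]mxE.
by rewrite sqnormE subr_ge0.
Qed.

Lemma sqnorm_const1 : sqnorm (const_mx 1) = n%:R.
Proof.
rewrite /sqnorm (eq_bigr (fun=> 1)) => [|i _]; last by rewrite mxE expr1n.
by rewrite sumr_const card_ord.
Qed.

Lemma psd_sqrtP (M : 'M[R]_n) (k : R) : (0 < n)%N -> 0 < k ->
  loewner_ge (psd_sqrt M ^+ 2) k%:M ->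
  psd (psd_sqrt M) /\ psd_sqrt M *m psd_sqrt M = M.
Proof.
move=> n0 k0 /loewner_ge_sqr_scalar; rewrite /psd_sqrt.
case: xgetP => [S _ [] //|_ /(_ (const_mx 1))].
by rewrite sqnorm_const1 /qform !mulmx0 mul0mx mxE leNgt mulr_gt0 ?ltr0n.
Qed.

Lemma hs2_tr_sqr A : A^T = A -> hs2 A = \tr (A *m A).
Proof.
move=> sA; apply: eq_bigr => i _; rewrite mxE; apply: eq_bigr => j _.
by rewrite expr2 -[in X in _ * X]sA mxE.
Qed.

End QuadraticForms.

Section Expectation.
Context {dT : measure_display} {T : measurableType dT} {R : realType}.
Variable P : probability T R.
Implicit Types (f g : T -> R) (k : R).

Definition L1 f := P.-integrable setT (EFin \o f).
(* Integrability of [f^2] alone does not make [f] measurable. *)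
Definition L2 f := measurable_fun setT f /\ L1 (fun w => f w ^+ 2).

Lemma L1_ext f g : L1 f -> f =1 g -> L1 g.
Proof. by move=> + e; apply: eq_integrable => // x _ /=; rewrite e. Qed.

Lemma Ex_ext f g : f =1 g -> Ex P f = Ex P g.
Proof. by move=> e; congr Ex; apply: funext. Qed.

Lemma L1D f g : L1 f -> L1 g -> L1 (fun w => f w + g w).
Proof.
move=> hf hg; have := integrableD measurableT hf hg.
by apply: eq_integrable => // x _ /=; rewrite EFinD.
Qed.

Lemma L1Z k f : L1 f -> L1 (fun w => k * f w).
Proof.
move=> hf; have := integrableZl measurableT k hf.
by apply: eq_integrable => // x _ /=; rewrite EFinM.
Qed.

Lemma L1B f g : L1 f -> L1 g -> L1 (fun w => f w - g w).
Proof. by move=> hf hg; apply: L1_ext (L1D hf (L1Z (-1) hg)) _ => w; rewrite mulN1r. Qed.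

Lemma L1_cst k : L1 (fun _ => k).
Proof. exact: finite_measure_integrable_cst. Qed.

Lemma L1_sum (I : Type) (s : seq I) (F : I -> T -> R) :
  (forall i, L1 (F i)) -> L1 (fun w => \sum_(i <- s) F i w).
Proof.
move=> h; elim: s => [|i s IH]; first by apply: L1_ext (L1_cst 0) _ => w; rewrite big_nil.
by apply: L1_ext (L1D (h i) IH) _ => w; rewrite big_cons.
Qed.

Lemma L1_dominated f g : measurable_fun setT f -> L1 g ->
  {ae P, forall w, `|f w| <= g w} -> L1 f.
Proof.
move=> mf hg hae; apply/integrableP; split; first exact/measurable_EFinP.
have /integrableP [mg gfin] := hg; apply: le_lt_trans gfin.
apply: ae_ge0_le_integral => //;
  try (by move=> x _; apply: abse_ge0);
  try (by apply: measurableT_comp => //; exact/measurable_EFinP).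
apply: filterS hae => w h _ /=; rewrite !lee_fin.
exact: le_trans h (ler_norm _).
Qed.

Lemma ExD f g : L1 f -> L1 g -> Ex P (fun w => f w + g w) = Ex P f + Ex P g.
Proof.
move=> hf hg; have fin h : L1 h -> ('E_P[h] \is a fin_num)%E.
  by move=> ?; apply: expectation_fin_num; apply/Lfun1_integrable.
by rewrite /Ex expectationD ?fineD ?fin //; apply/Lfun1_integrable.
Qed.

Lemma ExZ k f : L1 f -> Ex P (fun w => k * f w) = k * Ex P f.
Proof.
move=> hf; have hf1 : f \in Lfun P 1 by apply/Lfun1_integrable.
have -> : (fun w => k * f w) = k \o* f by apply: funext => w /=; rewrite mulrC.
by rewrite /Ex expectationZl // fineM // expectation_fin_num.
Qed.

Lemma ExB f g : L1 f -> L1 g -> Ex P (fun w => f w - g w) = Ex P f - Ex P g.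
Proof.
move=> hf hg; rewrite -mulN1r -ExZ // -ExD ?L1Z //.
by apply: Ex_ext => w; rewrite mulN1r.
Qed.

Lemma Ex_cst k : Ex P (fun _ => k) = k.
Proof. by rewrite /Ex (_ : (fun _ => k) = cst k) // expectation_cst. Qed.

Lemma Ex_sum (I : Type) (s : seq I) (F : I -> T -> R) : (forall i, L1 (F i)) ->
  Ex P (fun w => \sum_(i <- s) F i w) = \sum_(i <- s) Ex P (F i).
Proof.
move=> h; elim: s => [|i s IH].
  by rewrite big_nil -[RHS](Ex_cst 0); apply: Ex_ext => w; rewrite big_nil.
rewrite big_cons -IH -ExD ?L1_sum //.
by apply: Ex_ext => w; rewrite big_cons.
Qed.

Lemma Ex_ge0 f : (forall w, 0 <= f w) -> 0 <= Ex P f.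
Proof. by move=> h; apply: fine_ge0; apply: expectation_ge0. Qed.

Lemma Ex_le_ae f g : L1 f -> L1 g -> {ae P, forall w, f w <= g w} ->
  Ex P f <= Ex P g.
Proof.
move=> hf hg hae; rewrite -subr_ge0 -ExB //; apply: fine_ge0; rewrite unlock.
have mfg : measurable_fun setT (fun w => g w - f w).
  by move: (L1B hg hf) => /measurable_int /measurable_EFinP.
rewrite (ae_eq_integral (abse \o (EFin \o (fun w => g w - f w)))) //.
- by apply: integral_ge0 => x _; exact: abse_ge0.
- exact/measurable_EFinP.
- by apply: measurableT_comp => //; exact/measurable_EFinP.
- by apply: filterS hae => w h _; rewrite /comp abse_EFin ger0_norm ?subr_ge0.
Qed.

Lemma L2_L1M f g : L2 f -> L2 g -> L1 (fun w => f w * g w).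
Proof.
move=> [mf hf] [mg hg]; apply: (L1_dominated (g := fun w => f w ^+ 2 + g w ^+ 2)).
- exact: measurable_funM.
- exact: L1D.
- by apply: aeW => w; exact: normM_le_sqrD.
Qed.

Lemma L2D f g : L2 f -> L2 g -> L2 (fun w => f w + g w).
Proof.
move=> hf hg; split; first by apply: measurable_funD; [case: hf|case: hg].
apply: (L1_ext (f := fun w => f w ^+ 2 + (2 * (f w * g w) + g w ^+ 2))).
  by apply: L1D; [case: hf|apply: L1D; [apply: L1Z; exact: L2_L1M|case: hg]].
by move=> w; ring.
Qed.

Lemma L2Z k f : L2 f -> L2 (fun w => k * f w).
Proof.
move=> [mf hf]; split; first by apply: measurable_funM => //; exact: measurable_cst.
by apply: (L1_ext (L1Z (k ^+ 2) hf)) => w; ring.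
Qed.

Lemma L2B f g : L2 f -> L2 g -> L2 (fun w => f w - g w).
Proof.
move=> hf hg; have := L2D hf (L2Z (-1) hg).
by congr L2; apply: funext => w; rewrite mulN1r.
Qed.

Lemma L2_sum (I : Type) (s : seq I) (F : I -> T -> R) :
  (forall i, L2 (F i)) -> L2 (fun w => \sum_(i <- s) F i w).
Proof.
move=> h; elim: s => [|i s IH].
  have : L2 (fun _ => 0) by split; [exact: measurable_cst|exact: L1_cst].
  by congr L2; apply: funext => w; rewrite big_nil.
by have := L2D (h i) IH; congr L2; apply: funext => w; rewrite big_cons.
Qed.

Lemma L2M_bounded f g (C : R) : L2 f -> measurable_fun setT g ->
  {ae P, forall w, g w ^+ 2 <= C} -> L2 (fun w => f w * g w).
Proof.
move=> [mf hf] mg hae; split; first exact: measurable_funM.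
apply: (L1_dominated (g := fun w => C * f w ^+ 2)).
- by apply: measurable_funX; exact: measurable_funM.
- exact: L1Z.
- apply: filterS hae => w h.
  by rewrite ger0_norm ?sqr_ge0 // exprMn mulrC ler_wpM2r ?sqr_ge0.
Qed.

Lemma Ex_cauchy_schwarz f g : L2 f -> L2 g ->
  Ex P (fun w => f w * g w) ^+ 2 <=
  Ex P (fun w => f w ^+ 2) * Ex P (fun w => g w ^+ 2).
Proof.
move=> hf hg; have hfg := L2_L1M hf hg; have [_ hf2] := hf; have [_ hg2] := hg.
apply: quadratic_ge0_discr => [|t]; first by apply: Ex_ge0 => w; exact: sqr_ge0.
have -> : Ex P (fun w => f w ^+ 2) + 2 * Ex P (fun w => f w * g w) * t +
    Ex P (fun w => g w ^+ 2) * t ^+ 2 =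
    Ex P (fun w => f w ^+ 2 + ((2 * t) * (f w * g w) + t ^+ 2 * g w ^+ 2)).
  by rewrite ExD ?L1D ?L1Z // ExD ?L1Z // !ExZ //; ring.
by apply: Ex_ge0 => w; rewrite (_ : _ + _ = (f w + t * g w) ^+ 2) ?sqr_ge0 //; ring.
Qed.

End Expectation.

Section LinearModel.
Context {dT : measure_display} {T : measurableType dT} {R : realType}.
Variables (P : probability T R) (d : nat) (X : 'I_d -> T -> R) (Y : T -> R) (K : R).
Hypotheses (mX : forall i, measurable_fun setT (X i)) (mY : measurable_fun setT Y).
Hypotheses (hK : {ae P, forall w, \sum_i X i w ^+ 2 <= K}) (hY : L1 P (fun w => Y w ^+ 2)).

Let r := resid X Y.
Let m := Erx P X Y.
Let x := Xv X.

Lemma SigmaE i j : Sigma P X i j = Ex P (fun w => X i w * X j w).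
Proof. by rewrite mxE; apply: Ex_ext => w; rewrite !mxE big_ord1 !mxE. Qed.

Lemma ErxE th i : m th i 0 = Ex P (fun w => r th w * X i w).
Proof. by rewrite mxE; apply: Ex_ext => w; rewrite !mxE. Qed.

Lemma covmatE th i j : covmat P X Y th i j =
  Ex P (fun w => r th w ^+ 2 * (X i w * X j w)) - m th i 0 * m th j 0.
Proof.
rewrite !mxE big_ord1 !mxE; congr (_ - _).
by apply: Ex_ext => w; rewrite !mxE big_ord1 !mxE.
Qed.

Lemma K_ge0 : 0 <= K.
Proof.
rewrite -(Ex_cst P K) -(Ex_cst P 0); apply: Ex_le_ae; try exact: L1_cst.
by apply: filterS hK => w; apply: le_trans; apply: sumr_ge0 => i _; exact: sqr_ge0.
Qed.

Lemma sqr_X_le i : {ae P, forall w, X i w ^+ 2 <= K}.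
Proof.
apply: filterS hK => w; apply: le_trans.
by rewrite (bigD1 i) //= lerDl; apply: sumr_ge0 => j _; exact: sqr_ge0.
Qed.

Lemma L2X i : L2 P (X i).
Proof.
have L2_1 : L2 P (fun=> 1) by split; [exact: measurable_cst|exact: L1_cst].
by have := L2M_bounded L2_1 (mX i) (sqr_X_le i); congr L2; apply: funext => w; rewrite mul1r.
Qed.

Lemma L2_resid th : L2 P (r th).
Proof. exact: L2B (L2_sum _ (fun i => L2Z (th i 0) (L2X i))) (conj mY hY). Qed.

Lemma L2_mulXX f i j : L2 P f -> L2 P (fun w => f w * (X i w * X j w)).
Proof.
move=> hf; apply: (L2M_bounded (C := K * K) hf (measurable_funM (mX i) (mX j))).
apply: filterS2 (sqr_X_le i) (sqr_X_le j) => w hi hj.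
by rewrite exprMn; apply: ler_pM => //; exact: sqr_ge0.
Qed.

Lemma L1_resid2XX th i j : L1 P (fun w => r th w ^+ 2 * (X i w * X j w)).
Proof. by apply: L1_ext (L2_L1M (L2_resid th) (L2_mulXX i j (L2_resid th))) _ => w; ring. Qed.

Lemma L1_residX th i : L1 P (fun w => r th w * X i w).
Proof. exact: L2_L1M (L2_resid th) (L2X i). Qed.

Lemma sqnorm_xE w : sqnorm (x w) = \sum_i X i w ^+ 2.
Proof. by apply: eq_bigr => i _; rewrite mxE. Qed.

(* [|E[r X]|^2 = E[r <E[r X], X>] <= sqrt(E[r^2] E[<E[r X], X>^2])] and
   [<E[r X], X>^2 <= K |E[r X]|^2]. *)
Lemma sqnorm_Erx_le th : sqnorm (m th) <= K * Ex P (fun w => r th w ^+ 2).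
Proof.
set V := fun w => \sum_i m th i 0 * X i w.
have L2V : L2 P V := L2_sum _ (fun i => L2Z (m th i 0) (L2X i)).
have mE : sqnorm (m th) = Ex P (fun w => r th w * V w).
  transitivity (\sum_i Ex P (fun w => m th i 0 * (r th w * X i w))).
    by apply: eq_bigr => i _; rewrite ExZ ?L1_residX // -ErxE expr2.
  rewrite -Ex_sum => [|i]; last exact: L1Z (L1_residX th i).
  by apply: Ex_ext => w; rewrite /V mulr_sumr; apply: eq_bigr => i _; ring.
have EV2 : Ex P (fun w => V w ^+ 2) <= K * sqnorm (m th).
  rewrite -[X in _ <= X](Ex_cst P); apply: Ex_le_ae; [by case: L2V|exact: L1_cst|].
  apply: filterS hK => w h; apply: le_trans (cauchy_schwarz_sum _ _) _.
  by rewrite mulrC ler_wpM2r ?sqnorm_ge0.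
have cs := Ex_cauchy_schwarz (L2_resid th) L2V; rewrite -mE in cs.
have Er0 : 0 <= Ex P (fun w => r th w ^+ 2) by apply: Ex_ge0 => w; exact: sqr_ge0.
apply: le_of_sqr_le_mul; [exact: sqnorm_ge0|by rewrite mulr_ge0 ?K_ge0|].
by apply: le_trans cs _; rewrite [K * _]mulrC -mulrA ler_wpM2l.
Qed.

Lemma tr_covmat_le th : \tr (covmat P X Y th) <= K * Ex P (fun w => r th w ^+ 2).
Proof.
apply: (@le_trans _ _ (\sum_i Ex P (fun w => r th w ^+ 2 * (X i w * X i w)))).
  by apply: ler_sum => i _; rewrite covmatE gerBl -expr2 sqr_ge0.
rewrite -Ex_sum => [|i]; last exact: L1_resid2XX.
rewrite -ExZ; last by case: (L2_resid th).
apply: Ex_le_ae; first exact: L1_sum _ (fun i => L1_resid2XX th i i).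
  by apply: L1Z; case: (L2_resid th).
by apply: filterS hK => w h; rewrite -mulr_sumr mulrC ler_wpM2r ?sqr_ge0.
Qed.

Lemma qform_Sigma th eta :
  qform (Sigma P X) (th - eta) = Ex P (fun w => (r th w - r eta w) ^+ 2).
Proof.
set u := th - eta; rewrite /qform mxbilinE.
have L1XX i j : L1 P (fun w => u i 0 * u j 0 * (X i w * X j w)).
  exact: L1Z (L2_L1M (L2X i) (L2X j)).
transitivity (\sum_i \sum_j Ex P (fun w => u i 0 * u j 0 * (X i w * X j w))).
  apply: eq_bigr => i _; apply: eq_bigr => j _.
  by rewrite SigmaE ExZ ?(L2_L1M (L2X i) (L2X j)) // mulrC.
under eq_bigr do rewrite -Ex_sum //.
rewrite -Ex_sum => [|i]; last exact: L1_sum.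
apply: Ex_ext => w; rewrite /r /resid opprB addrA subrK -sumrB expr2 mulr_suml.
apply: eq_bigr => i _; rewrite mulr_sumr; apply: eq_bigr => j _.
by rewrite !mxE; ring.
Qed.

(* Dual witness for [|covmat θ - covmat η|_HS]: take [W := covmat θ - covmat η]
   in [dot_covmat_sub] and apply Cauchy-Schwarz in [L^2(P)]. *)
Definition covmat_sub_dual (W : 'M[R]_d) th eta (w : T) : R :=
  (r th w + r eta w) * qform W (x w)
  - ((x w)^T *m W *m m th) 0 0 - ((m eta)^T *m W *m x w) 0 0.

Lemma covmat_sub_dualE (W : 'M[R]_d) th eta w : covmat_sub_dual W th eta w =
  \sum_i \sum_j W i j * ((r th w + r eta w) * (X i w * X j w)
                         - m th j 0 * X i w - m eta i 0 * X j w).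
Proof.
rewrite /covmat_sub_dual /qform !mxbilinE mulr_sumr -!sumrB; apply: eq_bigr => i _.
by rewrite mulr_sumr -!sumrB; apply: eq_bigr => j _; rewrite !mxE; ring.
Qed.

Lemma L2_covmat_sub_dual (W : 'M[R]_d) th eta : L2 P (covmat_sub_dual W th eta).
Proof.
have L2h := L2D (L2_resid th) (L2_resid eta).
have : L2 P (fun w => \sum_i \sum_j W i j * ((r th w + r eta w) * (X i w * X j w)
                         - m th j 0 * X i w - m eta i 0 * X j w)).
  apply: L2_sum => i; apply: L2_sum => j; apply: L2Z.
  exact: L2B (L2B (L2_mulXX i j L2h) (L2Z _ (L2X i))) (L2Z _ (L2X j)).
by congr L2; apply: funext => w; rewrite covmat_sub_dualE.
Qed.

Lemma dot_covmat_sub (W : 'M[R]_d) th eta :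
  \sum_i \sum_j W i j * (covmat P X Y th - covmat P X Y eta) i j =
  Ex P (fun w => (r th w - r eta w) * covmat_sub_dual W th eta w).
Proof.
set s := fun w => r th w - r eta w.
have L2s : L2 P s := L2B (L2_resid th) (L2_resid eta).
set F := fun i j w => s w * ((r th w + r eta w) * (X i w * X j w))
  - m th j 0 * (s w * X i w) - m eta i 0 * (s w * X j w).
have L1sX i : L1 P (fun w => s w * X i w) := L2_L1M L2s (L2X i).
have EsX i : Ex P (fun w => s w * X i w) = m th i 0 - m eta i 0.
  rewrite !ErxE -ExB ?L1_residX //; apply: Ex_ext => w; rewrite /s; ring.
have L1shXX i j : L1 P (fun w => s w * ((r th w + r eta w) * (X i w * X j w))).
  apply: L1_ext (L1B (L1_resid2XX th i j) (L1_resid2XX eta i j)) _ => w.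
  by rewrite /s; ring.
have EshXX i j : Ex P (fun w => s w * ((r th w + r eta w) * (X i w * X j w))) =
    Ex P (fun w => r th w ^+ 2 * (X i w * X j w))
    - Ex P (fun w => r eta w ^+ 2 * (X i w * X j w)).
  by rewrite -ExB ?L1_resid2XX //; apply: Ex_ext => w; rewrite /s; ring.
have L1F i j : L1 P (F i j) by apply: L1B; [apply: L1B|]; rewrite ?L1Z.
have EF i j : Ex P (F i j) = (covmat P X Y th - covmat P X Y eta) i j.
  have subE (A B : 'M[R]_d) : (A - B) i j = A i j - B i j by rewrite !mxE.
  by rewrite !ExB ?ExZ ?EshXX ?EsX ?L1B ?L1Z // subE !covmatE; ring.
transitivity (\sum_i \sum_j Ex P (fun w => W i j * F i j w)).
  by apply: eq_bigr => i _; apply: eq_bigr => j _; rewrite ExZ // EF.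
transitivity (\sum_i Ex P (fun w => \sum_j W i j * F i j w)).
  by apply: eq_bigr => i _; rewrite Ex_sum // => j; exact: L1Z.
rewrite -Ex_sum => [|i]; last by apply: L1_sum => j; exact: L1Z.
apply: Ex_ext => w; rewrite covmat_sub_dualE mulr_sumr; apply: eq_bigr => i _.
by rewrite mulr_sumr; apply: eq_bigr => j _; rewrite /F /s; ring.
Qed.

Lemma Ex_sqr_covmat_sub_dual_le (W : 'M[R]_d) th eta :
  Ex P (fun w => covmat_sub_dual W th eta w ^+ 2) <=
  9 * K ^+ 2 * hs2 W * (Ex P (fun w => r th w ^+ 2) + Ex P (fun w => r eta w ^+ 2)).
Proof.
have W0 := hs2_ge0 W; have K0 := K_ge0.
have L1r2 u : L1 P (fun w => r u w ^+ 2) by case: (L2_resid u).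
set c := 3 * hs2 W.
set B := fun w => 2 * K ^+ 2 * c * r th w ^+ 2
  + (2 * K ^+ 2 * c * r eta w ^+ 2 + c * K * (sqnorm (m th) + sqnorm (m eta))).
have L1B : L1 P B by apply: L1D; [apply: L1Z|apply: L1D; [apply: L1Z|apply: L1_cst]].
apply: (@le_trans _ _ (Ex P B)).
  apply: Ex_le_ae => //; first by case: (L2_covmat_sub_dual W th eta).
  apply: filterS hK => w; rewrite -sqnorm_xE => hx.
  have hQ : qform W (x w) ^+ 2 <= hs2 W * K ^+ 2.
    apply: le_trans (mxbilin_sqr_le _ _ _) _.
    by rewrite ler_wpM2l // expr2 ler_pM ?sqnorm_ge0.
  have hQth : ((x w)^T *m W *m m th) 0 0 ^+ 2 <= hs2 W * (K * sqnorm (m th)).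
    apply: le_trans (mxbilin_sqr_le _ _ _) _.
    by rewrite ler_wpM2l // ler_wpM2r ?sqnorm_ge0.
  have hQeta : ((m eta)^T *m W *m x w) 0 0 ^+ 2 <= hs2 W * (K * sqnorm (m eta)).
    apply: le_trans (mxbilin_sqr_le _ _ _) _.
    by rewrite ler_wpM2l // mulrC ler_wpM2r ?sqnorm_ge0.
  have hh : (r th w + r eta w) ^+ 2 <= 2 * (r th w ^+ 2 + r eta w ^+ 2).
    by rewrite -subr_ge0 (_ : _ - _ = (r th w - r eta w) ^+ 2) ?sqr_ge0 //; ring.
  apply: le_trans (sqr_sub3_le _ _ _) _.
  have -> : B w = 3 * (2 * (r th w ^+ 2 + r eta w ^+ 2) * (hs2 W * K ^+ 2)
      + hs2 W * (K * sqnorm (m th)) + hs2 W * (K * sqnorm (m eta))) by rewrite /B /c; ring.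
  by rewrite ler_wpM2l // !lerD // exprMn ler_pM ?sqr_ge0.
rewrite /B ExD ?L1D ?L1Z ?L1_cst // ExD ?L1Z ?L1_cst // Ex_cst !ExZ //.
have cK0 : 0 <= c * K by rewrite !mulr_ge0.
have hm := ler_wpM2l cK0 (lerD (sqnorm_Erx_le th) (sqnorm_Erx_le eta)).
rewrite addrA; apply: le_trans (lerD (lexx _) hm) _.
by rewrite /c; lra.
Qed.

Lemma hs2_covmat_sub_le th eta :
  hs2 (covmat P X Y th - covmat P X Y eta) <=
  18 * K ^+ 2 * qform (Sigma P X) (th - eta) * (Lrisk P X Y th + Lrisk P X Y eta).
Proof.
set E := covmat P X Y th - covmat P X Y eta.
have L2s : L2 P (fun w => r th w - r eta w) := L2B (L2_resid th) (L2_resid eta).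
have hsE : hs2 E = Ex P (fun w => (r th w - r eta w) * covmat_sub_dual E th eta w).
  by rewrite -dot_covmat_sub; apply: eq_bigr => i _; apply: eq_bigr => j _; rewrite expr2.
have cs := Ex_cauchy_schwarz L2s (L2_covmat_sub_dual E th eta).
rewrite -hsE -qform_Sigma in cs.
have q0 : 0 <= qform (Sigma P X) (th - eta).
  by rewrite qform_Sigma; apply: Ex_ge0 => w; exact: sqr_ge0.
have L0 u : 0 <= Lrisk P X Y u by rewrite /Lrisk divr_ge0 ?Ex_ge0 // => w; exact: sqr_ge0.
apply: le_of_sqr_le_mul; rewrite ?hs2_ge0 ?mulr_ge0 ?addr_ge0 ?sqr_ge0 ?K_ge0 //.
apply: le_trans cs _; apply: le_trans (ler_wpM2l q0 (Ex_sqr_covmat_sub_dual_le E th eta)) _.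
by rewrite /Lrisk; lra.
Qed.

Variable a : R.
Hypotheses (a_gt0 : 0 < a) (d_gt0 : (0 < d)%N).
Hypothesis hsig : forall th,
  loewner_ge (sigma_noise P X Y th ^+ 2) ((a ^+ 2 * Lrisk P X Y th)%:M).
Hypothesis hL : forall th, a ^+ 2 <= Lrisk P X Y th.

Let sigma := sigma_noise P X Y.
Let L := Lrisk P X Y.

Lemma Lrisk_gt0 th : 0 < L th.
Proof. exact: lt_le_trans (exprn_gt0 2 a_gt0) (hL th). Qed.

Lemma sigma_noiseP th : psd (sigma th) /\ sigma th *m sigma th = covmat P X Y th.
Proof. by apply: psd_sqrtP d_gt0 _ (hsig th); rewrite mulr_gt0 ?exprn_gt0 ?Lrisk_gt0. Qed.

Lemma hs2_sigma_noise_le th : hs2 (sigma th) <= 2 * K * L th.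
Proof.
have [[sS _] S2] := sigma_noiseP th.
rewrite hs2_tr_sqr // S2 (le_trans (tr_covmat_le th)) // /L /Lrisk; lra.
Qed.

Lemma K_gt0 : 0 < K.
Proof.
rewrite lt_def K_ge0 andbT; apply/eqP => K0.
have [pS _] := sigma_noiseP 0.
have k0 : 0 < a ^+ 2 * L 0 by rewrite mulr_gt0 ?exprn_gt0 ?Lrisk_gt0.
have := psd_sqr_lbound pS (ltW k0) (loewner_ge_sqr_scalar (hsig 0)) (const_mx 1).
have -> : hs2 (sigma 0) = 0.
  by apply/eqP; rewrite eq_le hs2_ge0 andbT (le_trans (hs2_sigma_noise_le 0)) // K0 mulr0 mul0r.
by rewrite sqnorm_const1 mul0r leNgt mulr_gt0 ?exprn_gt0 ?ltr0n.
Qed.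

Let kappa th := a ^+ 2 * L th / Num.sqrt (2 * K * L th).

Lemma kappa_ge0 th : 0 <= kappa th.
Proof. by rewrite divr_ge0 ?sqrtr_ge0 // mulr_ge0 ?exprn_ge0 ?ltW ?Lrisk_gt0. Qed.

Lemma kappa_sqr th : kappa th ^+ 2 = a ^+ 4 * L th / (2 * K).
Proof.
have [K0 L0] := (K_gt0, Lrisk_gt0 th).
have M0 : 0 < 2 * K * L th by apply: mulr_gt0 => //; rewrite mulr_gt0.
by rewrite expr_div_n (sqr_sqrtr (ltW M0)); field; rewrite !gt_eqF.
Qed.

Lemma sigma_noise_lbound th v : kappa th * sqnorm v <= qform (sigma th) v.
Proof.
have [pS _] := sigma_noiseP th; have [K0 L0] := (K_gt0, Lrisk_gt0 th).
apply: psd_lbound pS _ _ (hs2_sigma_noise_le th) (loewner_ge_sqr_scalar (hsig th)) v.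
  by rewrite mulr_ge0 ?exprn_ge0 ?ltW.
by apply: mulr_gt0 => //; rewrite mulr_gt0.
Qed.

Lemma hs2_sigma_noise_sub_le th eta :
  hs2 (sigma th - sigma eta) <=
  2 * (18 * K ^+ 2 / a ^+ 4) * K * qform (Sigma P X) (th - eta).
Proof.
have [K0 [Lth Leta]] := (K_gt0, (Lrisk_gt0 th, Lrisk_gt0 eta)).
have lip := hs2_sub_le_sqr (addr_ge0 (kappa_ge0 th) (kappa_ge0 eta))
  (sigma_noise_lbound th) (sigma_noise_lbound eta).
rewrite (sigma_noiseP th).2 (sigma_noiseP eta).2 in lip.
have cov := hs2_covmat_sub_le th eta.
set q := qform (Sigma P X) (th - eta) in cov *; set S := L th + L eta in cov.
have kS : a ^+ 4 * S / (2 * K) <= (kappa th + kappa eta) ^+ 2.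
  rewrite -subr_ge0 sqrrD !kappa_sqr /S mulrDr mulrDl.
  have k2 : 0 <= kappa th * kappa eta *+ 2 by apply/mulrn_wge0/mulr_ge0; apply: kappa_ge0.
  by rewrite (_ : _ - _ = kappa th * kappa eta *+ 2) //; ring.
have kSpos : 0 < a ^+ 4 * S / (2 * K).
  by rewrite divr_gt0 ?mulr_gt0 ?exprn_gt0 ?addr_gt0 // ltr0n.
rewrite -(ler_pM2r kSpos).
have -> : 2 * (18 * K ^+ 2 / a ^+ 4) * K * q * (a ^+ 4 * S / (2 * K)) =
    18 * K ^+ 2 * q * S by field; rewrite !gt_eqF ?exprn_gt0.
apply: le_trans cov; apply: le_trans lip.
by rewrite mulrC ler_wpM2r ?hs2_ge0.
Qed.

End LinearModel.

Theorem lemma5p3 (dT : measure_display) (T : measurableType dT) (R : realType)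
  (P : probability T R) (d : nat) (X : 'I_d -> {RV P >-> R}) (Y : {RV P >-> R})
  (K : R)
  (hK : {ae P, forall w, \sum_i (X i w) ^+ 2 <= K})
  (hY : P.-integrable setT (fun w => ((Y w) ^+ 2)%:E))
  (a : R) (ha : 0 < a)
  (hsig : forall theta : 'cV[R]_d,
     loewner_ge (sigma_noise P (fun i => X i) Y theta ^+ 2)
                ((a ^+ 2 * Lrisk P (fun i => X i) Y theta)%:M))
  (hL : forall theta : 'cV[R]_d, a ^+ 2 <= Lrisk P (fun i => X i) Y theta) :
  exists2 c : R, 0 < c &
    forall theta eta : 'cV[R]_d,
      hs2 (sigma_noise P (fun i => X i) Y theta - sigma_noise P (fun i => X i) Y eta)
      <= 2 * c * K *
         ((theta - eta)^T *m Sigma P (fun i => X i) *m (theta - eta)) 0 0.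
Proof.
have [d0|d_gt0] := posnP d.
  by exists 1 => // th eta; subst d; rewrite /hs2 big_ord0 mxbilinE big_ord0 !mulr0.
have mX i : measurable_fun setT (X i) := measurable_funPT (X i).
have mY : measurable_fun setT Y := measurable_funPT Y.
have K0 := K_gt0 mX mY hK hY ha d_gt0 hsig hL.
exists (18 * K ^+ 2 / a ^+ 4); first by rewrite !mulr_gt0 ?invr_gt0 ?exprn_gt0.
exact: hs2_sigma_noise_sub_le.
Qed.
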